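(* Fix $\alpha\in(0,1)$. In $\mathbb{Z}^4$, let $K=\{(x_1,x_2,0,0)\in\mathbb{Z}^4: x_1\ge0,\ |x_2|\le x_1^\alpha\}$ and $\Gamma=\mathbb{Z}^4\setminus K$, and equip $\mathbb{Z}^4$ with the lazy simple random walk (at each step stay put with probability $1/2$, otherwise move to one of the $8$ nearest neighbours, each with probability $1/16$). Then $\mathbb{Z}^4$ is $S$-transient with respect to $K$. Moreover, for every $\varepsilon\in(0,1)$ there is $L_\varepsilon>0$ such that $\psi_K(\mathbf{x})\le1-\varepsilon$ for all $\mathbf{x}\in\Gamma$ with $d_{\mathbf{x}}\ge|x_1^*|\ge L_\varepsilon$, where $d_{\mathbf{x}}:=d(\mathbf{x},K)$ and $\mathbf{x}^*=(x_1^*,x_2^*,x_3^*,x_4^* )\in K$ is a point achieving $d(\mathbf{x},K)$.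
   Context: $d$ is the graph (i.e. $\ell^1$) distance on $\mathbb{Z}^4$. $\psi_K(\mathbf{x})=\mathbb{P}^{\mathbf{x}}(\tau_K<\infty)$ where $\tau_K=\min\{n\ge0:X_n\in K\}$ for the lazy simple random walk $(X_n)$. $\mathbb{Z}^4$ is $S$-transient with respect to $K$ if there is a point $\mathbf{x}$ with $\psi_K(\mathbf{x})<1$. *)

From HB Require Import structures.
From mathcomp Require Import all_boot all_order all_algebra.
From mathcomp Require Import all_classical all_reals all_analysis.
Set Implicit Arguments. Unset Strict Implicit. Unset Printing Implicit Defensive.
Import Order.TTheory GRing.Theory Num.Theory.
Local Open Scope ring_scope.

(* Points of Z^4 are row vectors 'rV[int]_4; coordinate k (k = 0..3, i.e.
   x_{k+1} in the paper's 1-based numbering). *)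
Definition Z4 := 'rV[int]_4.
Definition crd (x : Z4) (k : nat) : int := x ord0 (inord k).

Definition dist (x y : Z4) : nat := (\sum_(i < 4) `|x ord0 i - y ord0 i|%N)%N.

Definition unitv (k : nat) : Z4 := delta_mx ord0 (inord k).

(* The 9 possible increments of the lazy simple random walk:
   index 0 = stay put; index 2k+1 = +e_k; index 2k+2 = -e_k (k = 0..3). *)
Definition lsrw_step (i : 'I_9) : Z4 :=
  if val i == 0%N then 0
  else if odd (val i) then unitv (val i).-1./2 else - unitv (val i).-1./2.

Definition weight (R : realType) (i : 'I_9) : R :=
  if val i == 0%N then 2^-1 else 16^-1.

Definition walk_pos n (x : Z4) (w : {ffun 'I_n -> 'I_9}) (k : nat) : Z4 :=
  x + \sum_(j < n | (val j < k)%N) lsrw_step (w j).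

(* P^x(tau_K <= n), computed on the finite path space of n increments:
   the sum, over all increment sequences, of their probability times the
   indicator that some X_k, 0 <= k <= n, lies in K. *)
Definition hit_prob (R : realType) (K : pred Z4) (n : nat) (x : Z4) : R :=
  \sum_(w : {ffun 'I_n -> 'I_9})
     (\prod_(j < n) weight R (w j)) *
     ([exists k : 'I_n.+1, K (walk_pos x w (val k))])%:R.

(* psi_K(x) = P^x(tau_K < oo) = sup_n P^x(tau_K <= n)  (continuity of measure). *)
Definition psi (R : realType) (K : pred Z4) (x : Z4) : R :=
  sup [set hit_prob R K n x | n in [set: nat]].

Definition S_transient (R : realType) (K : pred Z4) : Prop :=
  exists x : Z4, psi R K x < 1.

Definition Kset (R : realType) (alpha : R) : pred Z4 :=
  fun x => [&& crd x 2 == 0, crd x 3 == 0, (0 <= crd x 0)%R &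
             ((`|crd x 1|%:~R : R) <= powR ((crd x 0)%:~R) alpha)].

From HB Require Import structures.
From mathcomp Require Import all_boot all_order all_algebra.
From mathcomp Require Import all_classical all_reals all_analysis.
From mathcomp Require Import ring lra zify.
Set Implicit Arguments. Unset Strict Implicit. Unset Printing Implicit Defensive.
Import Order.TTheory GRing.Theory Num.Theory.
Local Open Scope ring_scope.

(* The function g z = 2 / (|z|^2 + 2) is superharmonic for the lazy walk on Z^4 (a discrete
   stand-in for the Green function |z|^-2), so a nonnegative sum of translates of g that is
   at least 1 on K dominates the probability of hitting K.  Sum g (. - y) over the points y
   of K, with x_1 bounded, and evaluate at x, where d = d(x, K) >= |x*_1|: a point y with
   y_1 = t has g (x - y) <= 8 / d(x, y)^2 and t + d <= 4 d(x, y), and the column y_1 = t of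
   K has at most 2 t^alpha + 1 points, so psi_K(x) <= C sum_(u >= d) u^(alpha - 2),
   which is O(d^(alpha - 1)) and hence small when d is large. *)

Section FfunCons.
Variable T : finType.

Definition fcons n (i : T) (w : {ffun 'I_n -> T}) : {ffun 'I_n.+1 -> T} :=
  [ffun j => if unlift ord0 j is Some j' then w j' else i].

Lemma fcons0 n i (w : {ffun 'I_n -> T}) : fcons i w ord0 = i.
Proof. by rewrite ffunE unlift_none. Qed.

Lemma fconsS n i (w : {ffun 'I_n -> T}) j : fcons i w (lift ord0 j) = w j.
Proof. by rewrite ffunE liftK. Qed.

Lemma sum_ffunS (V : nmodType) n (F : {ffun 'I_n.+1 -> T} -> V) :
  \sum_w F w = \sum_(i : T) \sum_(w : {ffun 'I_n -> T}) F (fcons i w).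
Proof.
rewrite pair_big /= (reindex (fun p => fcons p.1 p.2)) //.
exists (fun w : {ffun 'I_n.+1 -> T} => (w ord0, [ffun j => w (lift ord0 j)])).
  by move=> [i w] _ /=; rewrite fcons0; congr pair; apply/ffunP => j; rewrite ffunE fconsS.
by move=> w _; apply/ffunP => j; rewrite ffunE; case: unliftP => [j'|] ->; rewrite ?ffunE.
Qed.

End FfunCons.

Section HittingRecursion.
Variable R : realType.

Lemma weight_ge0 i : 0 <= weight R i.
Proof. by rewrite /weight; case: ifP. Qed.

Lemma sum_weight : \sum_i weight R i = 1.
Proof. by rewrite !big_ord_recr big_ord0 /weight /=; lra. Qed.

Lemma sum_path_weight n : \sum_(w : {ffun 'I_n -> 'I_9}) \prod_(j < n) weight R (w j) = 1.
Proof.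
rewrite -(bigA_distr_bigA (fun _ i => weight R i)) /=.
by apply: big1 => j _; exact: sum_weight.
Qed.

Lemma walk_pos0 n x (w : {ffun 'I_n -> 'I_9}) : walk_pos x w 0 = x.
Proof. by rewrite /walk_pos big_pred0 ?addr0. Qed.

Lemma walk_posS n x i (w : {ffun 'I_n -> 'I_9}) k :
  walk_pos x (fcons i w) k.+1 = walk_pos (x + lsrw_step i) w k.
Proof.
rewrite /walk_pos big_mkcond big_ord_recl /= fcons0 -addrA; congr (_ + _).
rewrite [in RHS]big_mkcond; congr (_ + _); apply: eq_bigr => j _.
by rewrite fconsS /bump.
Qed.

Lemma hit_prob0 K x : hit_prob R K 0 x = (K x)%:R.
Proof.
rewrite /hit_prob (eq_bigr (fun _ => (K x)%:R)); last first.
  move=> w _; rewrite big_ord0 mul1r; congr ((nat_of_bool _)%:R).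
  apply/idP/idP => [/existsP [k]|Kx]; last by apply/existsP; exists ord0; rewrite walk_pos0.
  by rewrite (ord1 k) walk_pos0.
by rewrite sumr_const card_ffun !card_ord expn0.
Qed.

Lemma hit_probS K n x : hit_prob R K n.+1 x =
  if K x then 1 else \sum_i weight R i * hit_prob R K n (x + lsrw_step i).
Proof.
have hitS i (w : {ffun 'I_n -> 'I_9}) :
    [exists k : 'I_n.+2, K (walk_pos x (fcons i w) k)] =
    K x || [exists k : 'I_n.+1, K (walk_pos (x + lsrw_step i) w k)].
  apply/existsP/orP => [[k]|[Kx|/existsP [k Kk]]].
  - case: (unliftP ord0 k) => [k'|] -> /=; last by rewrite walk_pos0; left.
    by rewrite /bump /= add1n walk_posS => Kk; right; apply/existsP; exists k'.
  - by exists ord0; rewrite walk_pos0.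
  - by exists (lift ord0 k); rewrite /= /bump /= add1n walk_posS.
rewrite /hit_prob sum_ffunS; case: ifP => Kx.
  rewrite -[RHS](sum_path_weight n.+1) sum_ffunS.
  by apply: eq_bigr => i _; apply: eq_bigr => w _; rewrite hitS Kx mulr1.
apply: eq_bigr => i _; rewrite big_distrr; apply: eq_bigr => w _.
rewrite hitS Kx /= big_ord_recl fcons0 mulrA.
by congr (_ * _ * _); apply: eq_bigr => j _; rewrite fconsS.
Qed.

End HittingRecursion.

Section Superharmonic.
Variable R : realType.

Definition superharmonic (h : Z4 -> R) :=
  forall z, \sum_i weight R i * h (z + lsrw_step i) <= h z.

Lemma hit_prob_le_superharmonic (K : pred Z4) (h : Z4 -> R) :
  (forall z, 0 <= h z) -> (forall z, K z -> 1 <= h z) -> superharmonic h ->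
  forall n z, hit_prob R K n z <= h z.
Proof.
move=> h_ge0 h_ge1 h_super; elim=> [|n IHn] z.
  by rewrite hit_prob0; case: (boolP (K z)) => [/h_ge1|_].
rewrite hit_probS; case: ifP => [/h_ge1 //|_].
apply: le_trans (h_super z); apply: ler_sum => i _.
by rewrite ler_wpM2l ?weight_ge0.
Qed.

Lemma hit_prob_mono (K K' : pred Z4) n x :
  (forall (w : {ffun 'I_n -> 'I_9}) (k : 'I_n.+1),
     K (walk_pos x w k) -> K' (walk_pos x w k)) ->
  hit_prob R K n x <= hit_prob R K' n x.
Proof.
move=> KK'; apply: ler_sum => w _; apply: ler_wpM2l.
  by apply: prodr_ge0 => j _; exact: weight_ge0.
rewrite ler_nat; case: (boolP [exists k, _]) => // /existsP [k /KK' K'k].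
by rewrite (_ : [exists k, _] = true) //; apply/existsP; exists k.
Qed.

Lemma superharmonic_shift (h : Z4 -> R) p :
  superharmonic h -> superharmonic (fun z => h (z - p)).
Proof. by move=> h_super z; under eq_bigr do rewrite addrAC; exact: h_super. Qed.

Lemma superharmonic_sum (I : Type) (r : seq I) (F : I -> Z4 -> R) :
  (forall i, superharmonic (F i)) -> superharmonic (fun z => \sum_(i <- r) F i z).
Proof.
move=> F_super z; under eq_bigr do rewrite big_distrr.
by rewrite exchange_big; apply: ler_sum => i _; exact: F_super.
Qed.

End Superharmonic.

Definition pt4 (a b c e : int) : Z4 := \row_(m < 4) nth 0 [:: a; b; c; e] m.

Lemma crd_pt4 a b c e k : (k < 4)%N -> crd (pt4 a b c e) k = nth 0 [:: a; b; c; e] k.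
Proof. by move=> k4; rewrite /crd mxE inordK. Qed.

Lemma Z4_eq (y z : Z4) : (forall k, (k < 4)%N -> crd y k = crd z k) -> y = z.
Proof.
move=> yz; apply/matrixP => i m; rewrite [i]ord1.
by have := yz m (ltn_ord m); rewrite /crd inord_val.
Qed.

Lemma sum_ord4 (V : nmodType) (F : 'I_4 -> V) :
  \sum_i F i = F (inord 0) + F (inord 1) + F (inord 2) + F (inord 3).
Proof.
rewrite !big_ord_recl big_ord0 addr0 !addrA.
by congr (_ + _ + _ + _); congr F; apply: val_inj; rewrite /= inordK.
Qed.

Lemma dist_crd x y : dist x y =
  (`|crd x 0 - crd y 0| + `|crd x 1 - crd y 1| + `|crd x 2 - crd y 2| + `|crd x 3 - crd y 3|)%N.
Proof. by rewrite /dist sum_ord4. Qed.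

Lemma lsrw_step_entry_le i m : `|lsrw_step i ord0 m| <= 1.
Proof.
rewrite /lsrw_step; case: ifP => _; first by rewrite mxE normr0.
by case: ifP => _; rewrite !mxE ?normrN; case: (_ && _); rewrite ?normr0 ?normr1.
Qed.

Lemma crd_walk_pos_le n x (w : {ffun 'I_n -> 'I_9}) k c :
  `|crd (walk_pos x w k) c - crd x c| <= n%:Z.
Proof.
rewrite /crd /walk_pos mxE addrAC subrr add0r summxE.
apply: le_trans (ler_norm_sum _ _ _) _.
apply: (@le_trans _ _ (\sum_(j < n) 1)); last by rewrite sumr_const card_ord; lia.
rewrite big_mkcond /=; apply: ler_sum => j _; case: ifP => _ //.
exact: lsrw_step_entry_le.
Qed.

Lemma sqr_sum_le (R : realFieldType) (I : finType) (b : I -> R) :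
  (\sum_i b i) ^+ 2 <= #|I|%:R * \sum_i b i ^+ 2.
Proof.
have diag : \sum_i \sum_(j : I) b i ^+ 2 = #|I|%:R * \sum_i b i ^+ 2.
  by rewrite mulr_sumr; apply: eq_bigr => i _; rewrite sumr_const mulr_natl.
have cross : \sum_i \sum_j b i * b j = (\sum_i b i) ^+ 2.
  by rewrite expr2 big_distrl; apply: eq_bigr => i _; rewrite big_distrr.
have expand : \sum_i \sum_j (b i - b j) ^+ 2 =
    \sum_i \sum_(j : I) b i ^+ 2 + \sum_(i : I) \sum_j b j ^+ 2 - 2 * \sum_i \sum_j b i * b j.
  rewrite mulr_sumr -big_split -sumrB /=; apply: eq_bigr => i _.
  by rewrite mulr_sumr -big_split -sumrB /=; apply: eq_bigr => j _; ring.
have : 0 <= \sum_i \sum_j (b i - b j) ^+ 2.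
  by do 2!apply: sumr_ge0 => ? _; exact: sqr_ge0.
rewrite expand cross diag sumr_const mulr_natl; lra.
Qed.

Section Green.
Variable R : realType.

Definition sqnorm (z : Z4) : R := \sum_m (z ord0 m)%:~R ^+ 2.

Definition green (z : Z4) : R := 2 / (sqnorm z + 2).

Lemma sqnorm_ge0 z : 0 <= sqnorm z.
Proof. by apply: sumr_ge0 => m _; exact: sqr_ge0. Qed.

Lemma sqnorm_add_unitv z (k : 'I_4) (e : int) :
  sqnorm (z + e *: unitv k) = sqnorm z + 2 * e%:~R * (z ord0 k)%:~R + e%:~R ^+ 2.
Proof.
rewrite /sqnorm /unitv inord_val (bigD1 k) // [in RHS](bigD1 k) //=.
under eq_bigr => m mk do rewrite !mxE (negbTE mk) andbF mulr0 addr0.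
by rewrite !mxE !eqxx mulr1 intrD; ring.
Qed.

Lemma lsrw_mean (F : Z4 -> R) : \sum_i weight R i * F (lsrw_step i) =
  2^-1 * F 0 + 16^-1 * \sum_(k < 4) (F (unitv k) + F (- unitv k)).
Proof.
by rewrite !big_ord_recl !big_ord0 /weight /lsrw_step /= !addr0 !mulrDr !addrA.
Qed.

(* (s - 1)^2 + 8 = (s + 1)^2 - 4 (s - 2) bounds (s + 1)^2 - 4 a^2 from below uniformly in a. *)
Lemma green_pair_le (s a : R) : a ^+ 2 <= s - 2 ->
  2 / (s + 1 + 2 * a) + 2 / (s + 1 - 2 * a) <=
  4 / (s + 1) + 16 / (((s - 1) ^+ 2 + 8) * (s + 1)) * a ^+ 2.
Proof.
move=> a_le.
have pos_p : 0 < s + 1 + 2 * a by nra.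
have pos_m : 0 < s + 1 - 2 * a by nra.
have B_le : (s - 1) ^+ 2 + 8 <= (s + 1) ^+ 2 - 4 * a ^+ 2 by nra.
have -> : 2 / (s + 1 + 2 * a) + 2 / (s + 1 - 2 * a) =
          4 / (s + 1) + 16 / (((s + 1) ^+ 2 - 4 * a ^+ 2) * (s + 1)) * a ^+ 2.
  by field; rewrite !gt_eqF //; nra.
by rewrite lerD2l ler_wpM2r ?sqr_ge0 // ler_pM2l // lef_pV2 ?posrE ?mulr_gt0 ?ler_pM2r //; nra.
Qed.

Lemma green_superharmonic : superharmonic green.
Proof.
move=> z; rewrite (lsrw_mean (fun v => green (z + v))) addr0.
set s := sqnorm z + 2; set B := (s - 1) ^+ 2 + 8.
have s_ge2 : 2 <= s by rewrite /s lerDr sqnorm_ge0.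
have B_gt0 : 0 < B by rewrite /B; nra.
have pair (k : 'I_4) : green (z + unitv k) + green (z - unitv k) <=
    4 / (s + 1) + 16 / (B * (s + 1)) * (z ord0 k)%:~R ^+ 2.
  have a_le : (z ord0 k)%:~R ^+ 2 <= s - 2.
    by rewrite /s addrK /sqnorm (bigD1 k) //= lerDl sumr_ge0 // => m _; exact: sqr_ge0.
  rewrite /green -[unitv k]scale1r -scaleNr !sqnorm_add_unitv.
  set a := (z ord0 k)%:~R in a_le *.
  have -> : sqnorm z + 2 * 1%:~R * a + 1%:~R ^+ 2 + 2 = s + 1 + 2 * a by rewrite /s; ring.
  have -> : sqnorm z + 2 * (-1)%:~R * a + (-1)%:~R ^+ 2 + 2 = s + 1 - 2 * a by rewrite /s; ring.
  exact: green_pair_le.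
have sum_sq : \sum_(k < 4) (z ord0 k)%:~R ^+ 2 = s - 2 by rewrite /s addrK.
apply: le_trans
  (_ : 2^-1 * green z + 16^-1 * (4 / (s + 1) *+ 4 + 16 / (B * (s + 1)) * (s - 2)) <= _).
  rewrite lerD2l ler_wpM2l // -sum_sq mulr_sumr.
  apply: le_trans (ler_sum _ (fun k _ => pair k)) _.
  by rewrite big_split sumr_const card_ord.
rewrite /green -/s -subr_ge0.
have -> : 2 / s - (2^-1 * (2 / s) + 16^-1 * (4 / (s + 1) *+ 4 + 16 / (B * (s + 1)) * (s - 2)))
          = 9 / (s * (s + 1) * B).
  by rewrite /B -mulr_natr; field; rewrite !gt_eqF //; nra.
by rewrite divr_ge0 // !mulr_ge0 //; lra.
Qed.

Lemma green_ge0 z : 0 <= green z.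
Proof. by rewrite divr_ge0 // addr_ge0 ?sqnorm_ge0. Qed.

Lemma green0 : green 0 = 1.
Proof. by rewrite /green /sqnorm big1 ?add0r ?divff // => m _; rewrite mxE expr0n. Qed.

Lemma sqr_dist_le_sqnorm x y : (dist x y)%:R ^+ 2 <= 4 * sqnorm (x - y).
Proof.
have -> : (dist x y)%:R = \sum_m `|((x - y) ord0 m)%:~R| :> R.
  by rewrite /dist natr_sum; apply: eq_bigr => m _; rewrite !mxE natr_absz intr_norm.
rewrite /sqnorm; under [X in _ <= _ * X]eq_bigr do rewrite -real_normK ?num_real //.
by have := sqr_sum_le (fun m : 'I_4 => `|((x - y) ord0 m)%:~R : R|); rewrite card_ord.
Qed.

Lemma green_le_dist x y : (0 < dist x y)%N -> green (x - y) <= 8 / (dist x y)%:R ^+ 2.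
Proof.
rewrite -(ltr0n R) => d_gt0; have := sqr_dist_le_sqnorm x y.
have := sqnorm_ge0 (x - y); rewrite /green.
set D := (dist x y)%:R; set S := sqnorm _ => S_ge0 DS.
rewrite ler_pdivrMr; last lra.
by rewrite mulrAC ler_pdivlMr ?exprn_gt0 //; lra.
Qed.

End Green.

Lemma powR_div_sqr (R : realType) (a u : R) : 0 < u ->
  u `^ a / u ^+ 2 = (u * u `^ (1 - a))^-1.
Proof.
move=> u_gt0; have -> : u ^+ 2 = u * (u `^ a * u `^ (1 - a)).
  rewrite -powRD; last by apply/implyP => _; rewrite gt_eqF.
  by rewrite (addrC a) subrK powRr1 ?expr2 // ltW.
by field; rewrite !gt_eqF ?powR_gt0.
Qed.

Section PowerSums.
Variables (R : realType) (b : R).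
Hypotheses (b_gt0 : 0 < b) (b_lt1 : b < 1).

Lemma powR_bernoulli (u : R) : 0 <= u <= 1 -> (1 - u) `^ b <= 1 - b * u.
Proof.
case/andP => u_ge0 u_le1.
have := @conjugate_powR R ((1 - u) `^ b) 1 b^-1 (1 - b)^-1 (powR_ge0 _ _) ler01.
rewrite !invr_gt0 b_gt0 subr_gt0 b_lt1 !invrK addrC subrK => /(_ isT isT erefl).
rewrite mulr1 -powRrM divff ?gt_eqF // powRr1 ?subr_ge0 // powR1 => young.
by apply: le_trans young _; nra.
Qed.

Lemma inv_mul_powR_le (t : R) : 2 <= t ->
  (t * t `^ b)^-1 <= b^-1 * (((t - 1) `^ b)^-1 - (t `^ b)^-1).
Proof.
move=> t_ge2.
have Q_gt0 : 0 < t `^ b by rewrite powR_gt0 //; lra.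
have Q1_gt0 : 0 < (t - 1) `^ b by rewrite powR_gt0 //; lra.
have Q1_le : (t - 1) `^ b <= t `^ b.
  by apply: ge0_ler_powR; rewrite ?nnegrE ?(ltW b_gt0) //; lra.
have bern : t * (t - 1) `^ b <= (t - b) * t `^ b.
  have -> : t - 1 = (1 - t^-1) * t by field; rewrite gt_eqF //; lra.
  rewrite powRM ?subr_ge0 ?invf_le1 //; try lra.
  rewrite mulrA ler_wpM2r ?powR_ge0 //.
  have P_le : (1 - t^-1) `^ b <= 1 - b * t^-1.
    by apply: powR_bernoulli; rewrite invr_ge0 invf_le1; lra.
  apply: le_trans (ler_wpM2l _ P_le) _; first lra.
  by rewrite mulrBr mulr1 mulrCA divff ?mulr1 // gt_eqF //; lra.
set Q := t `^ b in Q_gt0 Q1_le bern *; set Q1 := (t - 1) `^ b in Q1_gt0 Q1_le bern *.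
have -> : b^-1 * (Q1^-1 - Q^-1) = (Q - Q1) / (b * Q * Q1) by field; rewrite !gt_eqF.
rewrite -div1r ler_pdivrMr ?mulr_gt0 //; try lra.
rewrite mulrAC ler_pdivlMr ?mulr_gt0 // mul1r.
have := ler_wpM2l (ltW Q_gt0) bern.
have := ler_wpM2l (ltW (mulr_gt0 b_gt0 Q_gt0)) Q1_le.
nra.
Qed.

Lemma sum_inv_mul_powR_le (d : R) N : 1 <= d ->
  \sum_(t < N) ((t%:R + d) * (t%:R + d) `^ b)^-1 <= (1 + b^-1) / d `^ b.
Proof.
move=> d_ge1; have d_gt0 : 0 < d by lra.
suff tail : \sum_(t < N.+1) ((t%:R + d) * (t%:R + d) `^ b)^-1 + b^-1 / (N%:R + d) `^ b
            <= (1 + b^-1) / d `^ b.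
  apply: le_trans tail; rewrite big_ord_recr /= -addrA lerDl.
  by rewrite addr_ge0 ?divr_ge0 ?invr_ge0 ?mulr_ge0 ?powR_ge0 ?addr_ge0 ?(ltW d_gt0) ?(ltW b_gt0).
elim: N => [|N IH].
  rewrite big_ord1 add0r mulrDl lerD2r mul1r lef_pV2 ?posrE ?mulr_gt0 ?powR_gt0 //.
  by rewrite ler_peMl ?powR_ge0.
apply: le_trans IH; rewrite big_ord_recr /= -addrA lerD2l.
have t_ge2 : 2 <= N.+1%:R + d by rewrite -natr1; have := ler0n R N; lra.
have := inv_mul_powR_le t_ge2.
have -> : N.+1%:R + d - 1 = N%:R + d by rewrite -natr1; ring.
by rewrite mulrBr; lra.
Qed.

End PowerSums.

Section Columns.
Variables (R : realType) (alpha : R).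

(* Column t of K is {(t, b, 0, 0) : |b| <= col_height t}; its points are the col_pt t j,
   j <= 2 * col_height t. *)
Definition col_height (t : nat) : nat := Num.truncn (t%:R `^ alpha : R).

Definition col_pt (t j : nat) : Z4 := pt4 t (j%:Z - (col_height t)%:Z) 0 0.

Definition col_potential (T : nat) (z : Z4) : R :=
  \sum_(t < T) \sum_(j < (2 * col_height t).+1) green R (z - col_pt t j).

Lemma Kset_pt4 (a b : int) :
  Kset alpha (pt4 a b 0 0) = (0 <= a) && (`|b|%:~R <= a%:~R `^ alpha).
Proof. by rewrite /Kset !crd_pt4 //= !eqxx. Qed.

Lemma col_heightP t (b : int) :
  (`|b|%:~R <= t%:R `^ alpha) = (`|b|%N <= col_height t)%N.
Proof. by rewrite -natr_absz truncn_ge_nat ?powR_ge0. Qed.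

Lemma Kset_col_pt t j : (j <= 2 * col_height t)%N -> Kset alpha (col_pt t j).
Proof.
by move=> j_le; rewrite /col_pt Kset_pt4 /= col_heightP; lia.
Qed.

Lemma col_pt_of_Kset z : Kset alpha z ->
  exists2 j, (j <= 2 * col_height `|crd z 0|)%N & z = col_pt `|crd z 0| j.
Proof.
case/and4P => /eqP z2 /eqP z3 z0.
have -> : ((crd z 0)%:~R : R) = `|crd z 0|%N%:R by rewrite natr_absz ger0_norm.
rewrite col_heightP => z1.
exists (absz (crd z 1 + (col_height `|crd z 0|)%:Z)); first lia.
apply: Z4_eq => -[|[|[|[|k]]]] // _; rewrite crd_pt4 //=; lia.
Qed.

Lemma col_potential_ge0 T z : 0 <= col_potential T z.
Proof. by do 2!apply: sumr_ge0 => ? _; exact: green_ge0. Qed.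

Lemma col_potential_superharmonic T : superharmonic (col_potential T).
Proof.
apply: superharmonic_sum => t; apply: superharmonic_sum => j.
exact/superharmonic_shift/green_superharmonic.
Qed.

Lemma col_potential_ge1 T z : Kset alpha z -> (`|crd z 0| < T)%N -> 1 <= col_potential T z.
Proof.
case/col_pt_of_Kset => j j_le z_col t_lt.
rewrite /col_potential (bigD1 (Ordinal t_lt)) //=.
rewrite (bigD1 (@Ordinal (2 * col_height `|crd z 0|).+1 j j_le)) //=.
rewrite -z_col subrr green0 -addrA lerDl addr_ge0 ?sumr_ge0 // => *.
  exact: green_ge0.
by apply: sumr_ge0 => *; exact: green_ge0.
Qed.

Lemma hit_prob_le_col_potential n x T : (`|crd x 0| + n < T)%N ->
  hit_prob R (Kset alpha) n x <= col_potential T x.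
Proof.
move=> T_gt.
(* Within n steps the walk stays in the slab |x_1| < T, which meets K in finitely many points. *)
pose K z := Kset alpha z && (`|crd z 0| < T)%N.
apply: (@le_trans _ _ (hit_prob R K n x)).
  apply: hit_prob_mono => w k Kz; rewrite /K Kz /=.
  by have := crd_walk_pos_le x w k 0; lia.
apply: hit_prob_le_superharmonic; rewrite /K.
- exact: col_potential_ge0.
- by move=> z /andP[]; exact: col_potential_ge1.
- exact: col_potential_superharmonic.
Qed.

End Columns.

Section FarFromK.
Variables (R : realType) (alpha : R) (x : Z4) (d : nat).
Hypotheses (alpha_gt0 : 0 < alpha) (alpha_lt1 : alpha < 1).
Hypotheses (d_gt0 : (0 < d)%N) (x0_le : (`|crd x 0| <= 2 * d)%N)
  (far_from_K : forall y, Kset alpha y -> (d <= dist x y)%N).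

Lemma dist_Kset_ge y : Kset alpha y -> (`|crd y 0| + d <= 4 * dist x y)%N.
Proof. by move=> Ky; have := far_from_K Ky; rewrite !dist_crd; lia. Qed.

Lemma green_Kset_le y : Kset alpha y ->
  green R (x - y) <= 128 / (`|crd y 0|%:R + d%:R) ^+ 2.
Proof.
move=> Ky; have y_ge := dist_Kset_ge Ky.
have dist_gt0 : (0 < dist x y)%N by lia.
apply: le_trans (green_le_dist R dist_gt0) _.
have : (`|crd y 0|%:R + d%:R : R) <= 4 * (dist x y)%:R.
  by rewrite -natrD -natrM ler_nat.
have : (0 : R) < d%:R by rewrite ltr0n.
have := ler0n R `|crd y 0|.
set t := `|crd y 0|%:R; set D := (dist x y)%:R => t_ge0 d_pos tD.
rewrite ler_pdivrMr ?exprn_gt0 //; last lra.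
by rewrite mulrAC ler_pdivlMr ?exprn_gt0 //; nra.
Qed.

Lemma col_sum_le t : \sum_(j < (2 * col_height alpha t).+1) green R (x - col_pt alpha t j)
  <= 384 * ((t%:R + d%:R) * (t%:R + d%:R) `^ (1 - alpha))^-1.
Proof.
set u : R := t%:R + d%:R.
have u_ge1 : 1 <= u by rewrite /u -natrD ler1n; lia.
apply: (@le_trans _ _ (\sum_(j < (2 * col_height alpha t).+1) 128 / u ^+ 2)).
  apply: ler_sum => j _; have := green_Kset_le (Kset_col_pt (ltn_ord j)).
  by rewrite /col_pt crd_pt4.
rewrite sumr_const card_ord -(mulr_natl (128 / u ^+ 2)) -powR_div_sqr; last lra.
rewrite !mulrA ler_wpM2r ?invr_ge0 ?sqr_ge0 //.
have m_le : (col_height alpha t)%:R <= u `^ alpha.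
  apply: le_trans (_ : t%:R `^ alpha <= _); first by rewrite truncn_le powR_ge0.
  apply: ge0_ler_powR; rewrite ?nnegrE ?ler0n ?(ltW alpha_gt0) ?(le_trans ler01 u_ge1) //.
  by rewrite /u lerDl.
have one_le : 1 <= u `^ alpha by rewrite -(powRr0 u) ler_powR // ltW.
by rewrite -addn1 natrD natrM; lra.
Qed.

Lemma col_potential_far_le T :
  col_potential alpha T x <= 384 * (1 + (1 - alpha)^-1) / d%:R `^ (1 - alpha).
Proof.
rewrite /col_potential; apply: le_trans (ler_sum _ (fun (t : 'I_T) _ => col_sum_le t)) _.
rewrite -mulr_sumr -mulrA ler_wpM2l // sum_inv_mul_powR_le ?ler1n //.
  by rewrite subr_gt0.
by rewrite ltrBlDr ltrDl.
Qed.

Lemma psi_far_le : psi R (Kset alpha) x <= 384 * (1 + (1 - alpha)^-1) / d%:R `^ (1 - alpha).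
Proof.
apply: ge_sup; first by exists (hit_prob R (Kset alpha) 0 x), 0%N.
move=> _ [n _ <-]; apply: le_trans (col_potential_far_le (`|crd x 0| + n).+1).
exact: hit_prob_le_col_potential.
Qed.

End FarFromK.

Lemma psi_Kset_far_le (R : realType) (alpha : R) : 0 < alpha -> alpha < 1 ->
  forall eps : R, 0 < eps -> eps < 1 ->
  exists L : R, 0 < L /\
    forall x xs : Z4,
      ~~ Kset alpha x ->
      Kset alpha xs ->
      (forall y : Z4, Kset alpha y -> (dist x xs <= dist x y)%N) ->
      (`|crd xs 0| <= dist x xs)%N ->
      L <= (`|crd xs 0|%N)%:R ->
      psi R (Kset alpha) x <= 1 - eps.
Proof.
move=> alpha_gt0 alpha_lt1 eps eps_gt0 eps_lt1.
set C := 384 * (1 + (1 - alpha)^-1).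
have C_gt0 : 0 < C by rewrite mulr_gt0 // addr_gt0 // invr_gt0 subr_gt0.
set M := C / (1 - eps); have M_gt0 : 0 < M by rewrite divr_gt0 // subr_gt0.
exists (M `^ (1 - alpha)^-1 + 1); split; first by rewrite ltr_wpDl ?powR_ge0.
move=> x xs _ _ xs_min xs0_le L_le; set d := dist x xs in xs_min xs0_le.
have d_ge : M `^ (1 - alpha)^-1 + 1 <= d%:R by apply: le_trans L_le _; rewrite ler_nat.
have d_gt0 : (0 < d)%N by rewrite -(ltr0n R); apply: lt_le_trans d_ge; rewrite ltr_wpDl ?powR_ge0.
have x0_le : (`|crd x 0| <= 2 * d)%N by move: xs0_le; rewrite /d dist_crd; lia.
apply: le_trans (psi_far_le alpha_gt0 alpha_lt1 d_gt0 x0_le xs_min) _.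
have M_le : M <= d%:R `^ (1 - alpha).
  have {1}-> : M = (M `^ (1 - alpha)^-1) `^ (1 - alpha).
    by rewrite -powRrM mulVf ?powRr1 ?gt_eqF ?subr_gt0 // ltW.
  apply: ge0_ler_powR; rewrite ?nnegrE ?powR_ge0 ?subr_ge0 ?ler0n ?(ltW alpha_lt1) //.
  by apply: le_trans d_ge; rewrite lerDl.
rewrite ler_pdivrMr ?(lt_le_trans M_gt0 M_le) // -/C mulrC -ler_pdivrMr //.
by rewrite subr_gt0.
Qed.

Lemma S_transient_Kset (R : realType) (alpha : R) :
  0 < alpha -> alpha < 1 -> S_transient R (Kset alpha).
Proof.
move=> alpha_gt0 alpha_lt1.
have half_gt0 : (0 : R) < 2^-1 by rewrite invr_gt0.
have half_lt1 : (2^-1 : R) < 1 by rewrite invf_lt1 ?ltr1n.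
have [L [_ far_le]] := psi_Kset_far_le alpha_gt0 alpha_lt1 half_gt0 half_lt1.
set N := (Num.truncn L).+1.
exists (pt4 N 0 N 0); apply: le_lt_trans (far_le _ (pt4 N 0 0 0) _ _ _ _ _) _.
- by rewrite /Kset !crd_pt4.
- by rewrite Kset_pt4 normr0 powR_ge0.
- by move=> y /and4P[/eqP y2 /eqP y3 _ _]; rewrite !dist_crd !crd_pt4 //=; lia.
- by rewrite !dist_crd !crd_pt4 //=; lia.
- by rewrite crd_pt4 //= ltW // truncnS_gt.
- lra.
Qed.

Unset Implicit Arguments.

Theorem lemma3p30 (R : realType) (alpha : R) (ha0 : 0 < alpha) (ha1 : alpha < 1) :
  S_transient R (Kset alpha) /\
  forall eps : R, 0 < eps -> eps < 1 ->
  exists L : R, 0 < L /\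
    forall x xs : Z4,
      ~~ Kset alpha x ->
      Kset alpha xs ->
      (forall y : Z4, Kset alpha y -> (dist x xs <= dist x y)%N) ->
      (`|crd xs 0| <= dist x xs)%N ->
      L <= (`|crd xs 0|%N)%:R ->
      psi R (Kset alpha) x <= 1 - eps.
Proof. by split; [exact: S_transient_Kset | exact: psi_Kset_far_le]. Qed.
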